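(* Let $u_\pm\in L^\infty(\mathbb{R};\mathbb{R})$ and let $\mathcal{L}=\begin{pmatrix} -u_- & i\partial_x\\ i\partial_x & -u_+\end{pmatrix}:H^1(\mathbb{R};\mathbb{C}^2)\to L^2(\mathbb{R};\mathbb{C}^2)$. If $\lambda\in\mathbb{R}$ is an eigenvalue of $\mathcal{L}$ (i.e. $\mathcal{L}\Psi=\lambda\Psi$ for some $\Psi\in H^1(\mathbb{R};\mathbb{C}^2)\setminus\{0\}$), then for every $c\in\mathbb{R}$, $$c-\lambda\le \|(u_-+c)^{(+)}\|_{L^\infty}\quad\text{or}\quad c+\lambda\le \|(u_+-c)^{(-)}\|_{L^\infty}.$$ In particular, if $u_+\ge c$ and $-u_-\ge c$ a.e. for some $c>0$, then $\mathcal{L}$ has no eigenvalues in $(-c,c)$.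
   Context: For a real function $f$, $f^{(+)}=\max\{f,0\}$ and $f^{(-)}=\max\{-f,0\}$ denote its positive and negative parts, so $f=f^{(+)}-f^{(-)}$. *)

From HB Require Import structures.
From mathcomp Require Import all_boot all_order all_algebra.
From mathcomp Require Import all_classical all_reals all_analysis.
From mathcomp Require Import complex.
Set Implicit Arguments. Unset Strict Implicit. Unset Printing Implicit Defensive.
Import Order.TTheory GRing.Theory Num.Theory.
Local Open Scope classical_set_scope.
Local Open Scope ring_scope.

Section Defs.
Variable R : realType.
Local Notation mu := (@lebesgue_measure R).

Definition pospart (f : R -> R) : R -> R := fun x => Num.max (f x) 0.
Definition negpart (f : R -> R) : R -> R := fun x => Num.max (- f x) 0.

Definition Linf_norm (f : R -> R) : \bar R := 'N[mu]_(+oo%E)[EFin \o f].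

Definition in_Linf (f : R -> R) : Prop :=
  measurable_fun [set: R] f /\ (Linf_norm f < +oo)%E.

Definition in_L2 (f : R -> R) : Prop :=
  measurable_fun [set: R] f /\ (\int[mu]_x ((f x) ^+ 2)%:E < +oo)%E.

Definition in_L2C (f : R -> R[i]) : Prop :=
  in_L2 (fun x => complex.Re (f x)) /\ in_L2 (fun x => complex.Im (f x)).

(* H^1(R; C): f is (a representative of) an L^2 function having an L^2
   derivative g in the sense f(y) - f(x) = int_x^y g for all x <= y
   (the absolutely continuous representative). *)
Definition is_H1_deriv (f g : R -> R[i]) : Prop :=
  in_L2C f /\ in_L2C g /\
  forall x y : R, x <= y ->
    complex.Re (f y) - complex.Re (f x)
      = \int[mu]_(t in `[x, y]) complex.Re (g t) /\
    complex.Im (f y) - complex.Im (f x)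
      = \int[mu]_(t in `[x, y]) complex.Im (g t).

Definition is_eigenvalue (um up : R -> R) (lam : R) : Prop :=
  exists (psi1 psi2 dpsi1 dpsi2 : R -> R[i]),
    is_H1_deriv psi1 dpsi1 /\ is_H1_deriv psi2 dpsi2 /\
    ~ (\forall x \ae mu, psi1 x = 0 /\ psi2 x = 0) /\
    (\forall x \ae mu,
       - ((um x)%:C)%C * psi1 x + 'i%C * dpsi2 x = (lam%:C)%C * psi1 x /\
       'i%C * dpsi1 x - ((up x)%:C)%C * psi2 x = (lam%:C)%C * psi2 x).

End Defs.

(* If both inequalities fail, then n := lam + u_+ and k := -(lam + u_-) are positive
   almost everywhere, and the eigenvalue equations split into two real systems
   g' = n h, h' = k g, for (g, h) = (Re psi1, Im psi2) and (-Im psi1, Re psi2).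
   Such a system has no nonzero square-integrable solution: if g(x0) > 0 and h(x0) >= 0,
   then to the right of x0, as long as g stays positive, h is nondecreasing, hence
   nonnegative, hence g is nondecreasing; a continuity argument gives g >= g(x0) on
   [x0, +oo[, which is not square-integrable. If h(x0) <= 0 the same happens on
   ]-oo, x0]. The symmetries (g, h) -> (-g, -h) and (g, h) -> (h, g) then force
   g = h = 0, so psi = 0. *)

From mathcomp Require Import all_boot all_order all_algebra.
From mathcomp Require Import all_classical all_reals all_analysis.
From mathcomp Require Import complex.
From mathcomp Require Import measurable_realfun ess_sup_inf ring lra.
Set Implicit Arguments.
Unset Strict Implicit.
Unset Printing Implicit Defensive.

Import Order.TTheory GRing.Theory Num.Theory.
Import numFieldNormedType.Exports.
Local Open Scope classical_set_scope.
Local Open Scope ring_scope.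

#[local] Instance lebesgue_ae_filter (R : realType) :
  Filter (almost_everywhere (@lebesgue_measure R)) := ae_filter_ringOfSetsType _.

Section continuous_induction.
Variable R : realType.

Lemma continuous_ge_right (g : R -> R) (x0 : R) : continuous g -> 0 < g x0 ->
  (forall y, x0 <= y -> (forall t, x0 <= t <= y -> 0 < g t) -> g x0 <= g y) ->
  forall y, x0 <= y -> g x0 <= g y.
Proof.
move=> gc gx0 step y1 x0y1.
pose A := [set y | x0 <= y <= y1 /\ forall t, x0 <= t <= y -> 0 < g t].
suff [_ ?] : A y1 by exact: step.
have Ax0 : A x0.
  split=> [|t /andP[x0t tx0]]; first by rewrite lexx x0y1.
  by have -> : t = x0 by apply/eqP; rewrite eq_le tx0 x0t.
have supA : has_sup A by split; [exists x0 | exists y1 => y [/andP[_ ?] _]].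
pose s := sup A.
have gx0_2 : 0 < g x0 / 2 by rewrite divr_gt0.
have /cvgrPdist_lt/(_ _ gx0_2)/nbhs_ballP[d /= d0 near_s] := gc s.
have [y Ay] := sup_adherent d0 supA; rewrite -/s => sdy.
have ys : y <= s := sup_upper_bound supA Ay.
case: Ay => /andP[x0y yy1] gpos.
have gxy := step y x0y gpos.
have gys : `|g s - g y| < g x0 / 2.
  by apply: near_s; rewrite /ball /= ger0_norm ?subr_ge0 //; lra.
(* [g s > g x0 / 2], so [g] stays positive on the ball of radius [d] around [s = sup A] *)
have Aext z : y <= z -> z < s + d -> z <= y1 -> A z.
  move=> yz zsd zy1; split=> [|t /andP[x0t tz]]; first by rewrite (le_trans x0y yz) zy1.
  have [ty|yt] := leP t y; first by apply: gpos; rewrite x0t ty.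
  have /near_s : ball s d t by rewrite /ball /= ltr_norml; apply/andP; split; lra.
  by move: gys; rewrite !ltr_norml => /andP[? ?] /andP[? ?]; lra.
have [y1sd|sdy1] := ltP y1 (s + d); first exact: Aext.
have /(sup_upper_bound supA) : A (s + d / 2) by apply: Aext; lra.
by rewrite -/s; lra.
Qed.

Lemma continuous_ge_left (g : R -> R) (x0 : R) : continuous g -> 0 < g x0 ->
  (forall y, y <= x0 -> (forall t, y <= t <= x0 -> 0 < g t) -> g x0 <= g y) ->
  forall y, y <= x0 -> g x0 <= g y.
Proof.
move=> gc gx0 step y yx0.
have gNc : continuous (g \o -%R).
  by move=> t; apply: continuous_comp; [exact: opp_continuous | exact: gc].
have := @continuous_ge_right (g \o -%R) (- x0) gNc; rewrite /= opprK.
move=> /(_ gx0 _ (- y)); rewrite opprK lerN2; apply=> // z x0z gpos.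
apply: step; first by rewrite lerNl.
by move=> t /andP[zt tx0]; rewrite -[t]opprK; apply: gpos; rewrite lerN2 tx0 lerNl zt.
Qed.

End continuous_induction.

Lemma eigen_equation_parts (R : rcfType) (a b lam : R) (z1 z2 d1 d2 : R[i]) :
  - (a%:C)%C * z1 + 'i%C * d2 = (lam%:C)%C * z1 ->
  'i%C * d1 - (b%:C)%C * z2 = (lam%:C)%C * z2 ->
  [/\ complex.Re d1 = (lam + b) * complex.Im z2,
      complex.Im d2 = - (lam + a) * complex.Re z1,
      - complex.Im d1 = (lam + b) * complex.Re z2 &
      complex.Re d2 = - (lam + a) * - complex.Im z1].
Proof.
case: z1 z2 d1 d2 => [x1 y1] [x2 y2] [p1 q1] [p2 q2] eq1 eq2.
have := congr1 (@complex.Re R) eq1; have := congr1 (@complex.Im R) eq1.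
have := congr1 (@complex.Re R) eq2; have := congr1 (@complex.Im R) eq2.
by rewrite /= => *; split; lra.
Qed.

Section L2_primitive.
Variable R : realType.
Local Notation mu := (@lebesgue_measure R).

Lemma in_L2_integrable_itv (f : R -> R) (a b : R) :
  in_L2 f -> mu.-integrable `[a, b] (EFin \o f).
Proof.
move=> [mf f2fin].
have mf2 : measurable_fun [set: R] (fun x => (f x ^+ 2)%:E : \bar R).
  by apply/measurable_EFinP; exact: measurable_funX.
have mab : measurable (`[a, b] : set R) by exact: measurable_itv.
have int1 : mu.-integrable `[a, b] (EFin \o cst (1 : R)).
  apply: measurable_bounded_integrable => //; last exact: bounded_cst.
  by have := lebesgue_measure_itv `[a, b]; rewrite /= => ->; case: ifP => _ //;
    rewrite -EFinD ltry.
have int2 : mu.-integrable `[a, b] (fun x => (f x ^+ 2)%:E).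
  apply: (@integrableS _ _ _ mu setT _ _ measurableT mab (@subsetT _ _)).
  apply/integrableP; split; first exact: mf2.
  apply: le_lt_trans f2fin; rewrite le_eqVlt; apply/orP; left; apply/eqP.
  by apply: eq_integral => x _; rewrite gee0_abs // lee_fin sqr_ge0.
apply: (@le_integrable _ _ _ mu _ mab _ (fun x => (1 + f x ^+ 2)%:E)) => [| x _ /= |].
- by apply/measurable_EFinP; exact: measurable_funS mf.
- rewrite lee_fin; apply: le_trans (ler_norm _).
  rewrite -[f x ^+ 2]real_normK ?num_real //.
  by have := normr_ge0 (f x); have := sqr_ge0 (`|f x| - 1); nra.
- have := @integrableD _ _ _ mu _ mab _ _ int1 int2.
  by apply: (@eq_integrable _ _ _ mu _ mab) => x _; rewrite /= EFinD.
Qed.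

Lemma Rintegral_ae_ge0 (D : set R) (f : R -> R) : measurable D ->
  measurable_fun setT f -> {ae mu, forall x, D x -> 0 <= f x} ->
  0 <= \int[mu]_(x in D) f x.
Proof.
move=> mD mf f0; apply: fine_ge0.
have -> : (\int[mu]_(x in D) (f x)%:E = \int[mu]_(x in D) (Num.max (f x) 0)%:E)%E.
  apply: ae_eq_integral => //.
  - by apply/measurable_EFinP; exact: measurable_funS mf.
  - apply/measurable_EFinP; apply: measurable_maxr; first exact: measurable_funS mf.
    exact: measurable_cst.
  - by apply: filterS f0 => x f0x Dx; rewrite max_l // f0x.
by apply: integral_ge0 => x _; rewrite lee_fin le_max lexx orbT.
Qed.

Definition L2_primitive (g dg : R -> R) := [/\ in_L2 g, in_L2 dg &
  forall x y, x <= y -> g y - g x = \int[mu]_(t in `[x, y]) dg t].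

Lemma L2_primitive_continuous (g dg : R -> R) : L2_primitive g dg -> continuous g.
Proof.
move=> [_ dgL2 gdg] t.
have tt1 : t - 1 < t + 1 by lra.
apply: (within_continuous_continuous tt1); last by rewrite in_itv /=; apply/andP; split; lra.
have dgI := in_L2_integrable_itv (t - 1) (t + 1) dgL2.
have /(subspace_eq_continuous _) : {within `[t - 1, t + 1], continuous
    ((fun x => parameterized_integral mu (t - 1) x dg) + cst (g (t - 1)))}.
  apply: within_continuousD (parameterized_integral_continuous (ltW tt1) dgI) _.
  exact: cst_continuous.
apply.
move=> x; rewrite inE /= in_itv /= => /andP[tx _].
by have := gdg _ _ tx; rewrite /from_subspace /parameterized_integral /= !fctE; lra.
Qed.

Lemma L2_primitive_le (g dg : R -> R) (x y : R) : L2_primitive g dg -> x <= y ->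
  {ae mu, forall t, x <= t <= y -> 0 <= dg t} -> g x <= g y.
Proof.
move=> [_ [mdg _] gdg] xy dg0; rewrite -subr_ge0 gdg //.
exact: Rintegral_ae_ge0.
Qed.

Lemma L2_primitiveN (g dg : R -> R) :
  L2_primitive g dg -> L2_primitive (fun x => - g x) (fun x => - dg x).
Proof.
move=> [[mg g2] [mdg dg2] gdg]; split.
- by split; [exact: measurable_funN | under eq_integral do rewrite sqrrN].
- by split; [exact: measurable_funN | under eq_integral do rewrite sqrrN].
- move=> x y xy; under eq_Rintegral => t _ do rewrite -mulN1r.
  by rewrite RintegralZl ?in_L2_integrable_itv // -gdg //; ring.
Qed.

Lemma in_L2_not_ge (g : R -> R) (A : set R) (c : R) : in_L2 g ->
  measurable A -> mu A = +oo%E -> 0 < c -> ~ (forall y, A y -> c <= g y ^+ 2).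
Proof.
move=> [mg g2] mA muA c0 cg.
have mg2 : measurable_fun [set: R] (fun x => (g x ^+ 2)%:E : \bar R).
  by apply/measurable_EFinP; exact: measurable_funX.
suff : (\int[mu]_(x in A) (cst c%:E) x <= \int[mu]_x (g x ^+ 2)%:E)%E.
  rewrite integral_cst //; set M := (X in (_ * X)%E).
  have -> : M = +oo%E by exact: muA.
  by rewrite gt0_muley ?lte_fin // leye_eq => /eqP g2oo; move: g2; rewrite g2oo ltxx.
apply: (@le_trans _ _ (\int[mu]_(x in A) (g x ^+ 2)%:E)%E).
  apply: ge0_le_integral => //.
  - by move=> x _; rewrite lee_fin ltW.
  - exact: measurable_funS mg2.
apply: (ge0_subset_integral mu mA measurableT mg2 _ (@subsetT _ A)).
by move=> x _; rewrite lee_fin sqr_ge0.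
Qed.

End L2_primitive.

Section pos_coupled_ode.
Variable R : realType.
Local Notation mu := (@lebesgue_measure R).

Definition pos_coupled_ode (g h dg dh n k : R -> R) :=
  {ae mu, forall x, dg x = n x * h x /\ dh x = k x * g x /\ 0 < n x /\ 0 < k x}.

Lemma pos_coupled_odeN (g h dg dh n k : R -> R) :
  pos_coupled_ode g h dg dh n k ->
  pos_coupled_ode (fun x => - g x) (fun x => - h x)
    (fun x => - dg x) (fun x => - dh x) n k.
Proof. by apply: filterS => x [-> [-> nk]]; rewrite !mulrN. Qed.

Lemma pos_coupled_ode_sym (g h dg dh n k : R -> R) :
  pos_coupled_ode g h dg dh n k -> pos_coupled_ode h g dh dg k n.
Proof. by apply: filterS => x [-> [-> [? ?]]]. Qed.

Section fixed_solution.
Variables (g h dg dh n k : R -> R).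
Hypotheses (gP : L2_primitive g dg) (hP : L2_primitive h dh).
Hypothesis ode : pos_coupled_ode g h dg dh n k.

Lemma pos_coupled_ode_ge_right (x0 : R) : 0 < g x0 -> 0 <= h x0 ->
  forall y, x0 <= y -> g x0 <= g y.
Proof.
move=> gx0 hx0; apply: continuous_ge_right (L2_primitive_continuous gP) gx0 _.
move=> y x0y gpos.
have hx0h t : x0 <= t <= y -> h x0 <= h t.
  move=> /andP[x0t ty]; apply: L2_primitive_le hP x0t _.
  apply: filterS ode => s [_ [-> [_ ks]]] /andP[x0s st].
  by apply: mulr_ge0 (ltW ks) (ltW (gpos s _)); rewrite x0s (le_trans st ty).
apply: L2_primitive_le gP x0y _.
apply: filterS ode => s [-> [_ [ns _]]] sy.
exact: mulr_ge0 (ltW ns) (le_trans hx0 (hx0h s sy)).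
Qed.

Lemma pos_coupled_ode_ge_left (x0 : R) : 0 < g x0 -> h x0 <= 0 ->
  forall y, y <= x0 -> g x0 <= g y.
Proof.
move=> gx0 hx0; apply: continuous_ge_left (L2_primitive_continuous gP) gx0 _.
move=> y yx0 gpos.
have hhx0 t : y <= t <= x0 -> h t <= h x0.
  move=> /andP[yt tx0]; apply: L2_primitive_le hP tx0 _.
  apply: filterS ode => s [_ [-> [_ ks]]] /andP[ts sx0].
  by apply: mulr_ge0 (ltW ks) (ltW (gpos s _)); rewrite sx0 (le_trans yt ts).
rewrite -lerN2; apply: L2_primitive_le (L2_primitiveN gP) yx0 _.
apply: filterS ode => s [-> [_ [ns _]]] ys; rewrite -mulrN.
by apply: mulr_ge0 (ltW ns) _; rewrite oppr_ge0 (le_trans (hhx0 s ys) hx0).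
Qed.

(* [g] would stay above [g x0] on a half-line, which a square-integrable function cannot do *)
Lemma pos_coupled_ode_le0 (x0 : R) : g x0 <= 0.
Proof.
rewrite leNgt; apply/negP => gx0.
have [gL2 _ _] := gP; have gx0_2 : 0 < g x0 ^+ 2 by rewrite exprn_gt0.
have [hx0|hx0] := leP 0 (h x0).
- apply: (in_L2_not_ge gL2 (measurable_itv `[x0, +oo[) _ gx0_2).
    by have := lebesgue_measure_itv `[x0, +oo[; rewrite /= ltry.
  move=> y; rewrite /= in_itv /= andbT => /(pos_coupled_ode_ge_right gx0 hx0) gxy.
  by nra.
- apply: (in_L2_not_ge gL2 (measurable_itv `]-oo, x0]) _ gx0_2).
    by have := lebesgue_measure_itv `]-oo, x0]; rewrite /= ltNyr.
  move=> y; rewrite /= in_itv /= => /(pos_coupled_ode_ge_left gx0 (ltW hx0)) gxy.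
  by nra.
Qed.

End fixed_solution.

Lemma pos_coupled_ode_eq0l (g h dg dh n k : R -> R) :
  L2_primitive g dg -> L2_primitive h dh -> pos_coupled_ode g h dg dh n k ->
  forall x, g x = 0.
Proof.
move=> gP hP ode x; apply/eqP; rewrite eq_le (pos_coupled_ode_le0 gP hP ode).
have := pos_coupled_ode_le0 (L2_primitiveN gP) (L2_primitiveN hP) (pos_coupled_odeN ode) x.
by rewrite oppr_le0.
Qed.

Lemma pos_coupled_ode_eq0 (g h dg dh n k : R -> R) :
  L2_primitive g dg -> L2_primitive h dh -> pos_coupled_ode g h dg dh n k ->
  forall x, g x = 0 /\ h x = 0.
Proof.
move=> gP hP ode x; split; first exact: pos_coupled_ode_eq0l gP hP ode x.
exact: pos_coupled_ode_eq0l hP gP (pos_coupled_ode_sym ode) x.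
Qed.

End pos_coupled_ode.

Section eigenvalue_bound.
Variable R : realType.
Local Notation mu := (@lebesgue_measure R).

Lemma H1_deriv_L2_primitive (psi dpsi : R -> R[i]) : is_H1_deriv psi dpsi ->
  L2_primitive (fun x => complex.Re (psi x)) (fun x => complex.Re (dpsi x)) /\
  L2_primitive (fun x => complex.Im (psi x)) (fun x => complex.Im (dpsi x)).
Proof. by move=> [[ReL2 ImL2] [[dReL2 dImL2] ftc]]; split; split=> // x y /ftc[]. Qed.

Lemma Linf_norm_lt (f : R -> R) (r : R) : (Linf_norm f < r%:E)%E ->
  {ae mu, forall x, `|f x| < r}.
Proof.
rewrite /Linf_norm unlock /= ifT; last first.
  have := lebesgue_measure_itv (`]-oo, +oo[ : interval R).
  by rewrite set_itvNyy /= => muT; have -> : mu [set: R] = +oo%E by exact: muT.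
move=> fr; apply: filterS (ess_sup_ge mu (abse \o (EFin \o f))) => x /= fx.
by rewrite -lte_fin; exact: le_lt_trans fx fr.
Qed.

Lemma Linf_norm_le0 (f : R -> R) : {ae mu, forall x, f x = 0} -> (Linf_norm f <= 0)%E.
Proof.
move=> f0; rewrite /Linf_norm unlock /=; case: ifPn => // _.
by apply/ess_supP; apply: filterS f0 => x /= ->; rewrite normr0.
Qed.

Lemma eigenvalue_bound (um up : R -> R) (lam c : R) : is_eigenvalue um up lam ->
  (((c - lam)%R)%:E <= Linf_norm (pospart (fun x => (um x + c)%R)))%E \/
  (((c + lam)%R)%:E <= Linf_norm (negpart (fun x => (up x - c)%R)))%E.
Proof.
move=> [psi1 [psi2 [dpsi1 [dpsi2 [psi1H1 [psi2H1 [psi_neq0 eig]]]]]]].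
have [|um_lt] := leP; first by left.
have [|up_lt] := leP; first by right.
exfalso; apply: psi_neq0.
pose n x := lam + up x; pose k x := - (lam + um x).
have nk_gt0 : {ae mu, forall x, 0 < n x /\ 0 < k x}.
  apply: filterS2 (Linf_norm_lt um_lt) (Linf_norm_lt up_lt) => x.
  rewrite /pospart /negpart => /(le_lt_trans (ler_norm _)) umx.
  move=> /(le_lt_trans (ler_norm _)) upx.
  have : um x + c <= Num.max (um x + c) 0 by rewrite le_max lexx.
  have : - (up x - c) <= Num.max (- (up x - c)) 0 by rewrite le_max lexx.
  by rewrite /n /k; lra.
have [ReP ImP] := H1_deriv_L2_primitive psi1H1.
have [ReP' ImP'] := H1_deriv_L2_primitive psi2H1.
have ode1 : pos_coupled_ode (fun x => complex.Re (psi1 x)) (fun x => complex.Im (psi2 x))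
    (fun x => complex.Re (dpsi1 x)) (fun x => complex.Im (dpsi2 x)) n k.
  apply: filterS2 eig nk_gt0 => x [eq1 eq2] [nx kx].
  by have [? ? _ _] := eigen_equation_parts eq1 eq2.
have ode2 : pos_coupled_ode (fun x => - complex.Im (psi1 x)) (fun x => complex.Re (psi2 x))
    (fun x => - complex.Im (dpsi1 x)) (fun x => complex.Re (dpsi2 x)) n k.
  apply: filterS2 eig nk_gt0 => x [eq1 eq2] [nx kx].
  by have [_ _ ? ?] := eigen_equation_parts eq1 eq2.
apply: aeW => x.
have [Re1 Im2] := pos_coupled_ode_eq0 ReP ImP' ode1 x.
have [Im1 Re2] := pos_coupled_ode_eq0 (L2_primitiveN ImP) ReP' ode2 x.
have Im1' : complex.Im (psi1 x) = 0 by apply: oppr_inj; rewrite Im1 oppr0.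
by split; [move: Re1 Im1'; case: (psi1 x) | move: Re2 Im2; case: (psi2 x)]
  => ? ? /= -> ->.
Qed.

Lemma no_eigenvalue_in_gap (um up : R -> R) (c lam : R) :
  {ae mu, forall x, c <= up x /\ c <= - um x} -> - c < lam < c ->
  ~ is_eigenvalue um up lam.
Proof.
move=> cu /andP[cl lc] eig.
have [um_le|up_le] := eigenvalue_bound c eig.
- suff : (Linf_norm (pospart (fun x => (um x + c)%R)) <= 0)%E.
    by move/(le_trans um_le); rewrite lee_fin; lra.
  apply: Linf_norm_le0; apply: filterS cu => x [_ cum].
  by rewrite /pospart max_r //; lra.
- suff : (Linf_norm (negpart (fun x => (up x - c)%R)) <= 0)%E.
    by move/(le_trans up_le); rewrite lee_fin; lra.
  apply: Linf_norm_le0; apply: filterS cu => x [cup _].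
  by rewrite /negpart max_r //; lra.
Qed.

End eigenvalue_bound.

Theorem theorem2p3 (R : realType) (um up : R -> R) :
  in_Linf um -> in_Linf up ->
  (forall lam : R, is_eigenvalue um up lam ->
     forall c : R,
       (((c - lam)%R)%:E <= Linf_norm (pospart (fun x => (um x + c)%R)))%E \/
       (((c + lam)%R)%:E <= Linf_norm (negpart (fun x => (up x - c)%R)))%E) /\
  (forall c : R, 0 < c ->
     (\forall x \ae (@lebesgue_measure R), c <= up x /\ c <= - um x) ->
     forall lam : R, - c < lam < c -> ~ is_eigenvalue um up lam).
Proof.
move=> _ _; split=> [lam eig c | c _ cu lam]; first exact: eigenvalue_bound.
exact: no_eigenvalue_in_gap.
Qed.
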